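(* Assume conditions (C1) and (C3) hold, and that either (a) $A$ is $L$-Lipschitz continuous and $r$-strongly monotone and $B$ is maximal monotone, or (b) $A$ is $L$-Lipschitz continuous and monotone and $B$ is maximal monotone and $r$-strongly monotone (for some $r>0$). Then the sequence $\{x_n\}$ generated by Algorithm 3.1 converges strongly to a point $p\in\Omega$.
   Context: Let $H$ be a real Hilbert space, $A:H\to H$ a single-valued mapping and $B:H\to 2^H$ a set-valued mapping, and let $\Omega:=(A+B)^{-1}(0)=\{x\in H:\ 0\in Ax+Bx\}$. Algorithm 3.1 is the following iteration. Fix $x_0,x_1\in H$, $\mu\in(0,1)$, $\lambda_1>0$, real sequences $\{\alpha_n\},\{\beta_n\},\{\theta_n\}$ and nonnegative real sequences $\{\mu_n\},\{p_n\}$. For $n=1,2,\dots$ compute $w_n=x_n+\alpha_n(x_n-x_{n-1})$, $z_n=x_n+\beta_n(x_n-x_{n-1})$, $y_n=(I+\lambda_nB)^{-1}(I-\lambda_nA)w_n$, and set $\lambda_{n+1}=\min\{(\mu_n+\mu)\|w_n-y_n\|/\|Aw_n-Ay_n\|,\ \lambda_n+p_n\}$ if $Aw_n\neq Ay_n$, and $\lambda_{n+1}=\lambda_n+p_n$ otherwise. If $w_n=y_n$ the algorithm stops (then $y_n\in\Omega$). Otherwise set $x_{n+1}=(1-\theta_n)z_n+\theta_n\big(y_n-\lambda_n(Ay_n-Aw_n)\big)$ and continue. Here $I$ is the identity and $(I+\lambda B)^{-1}$ is the resolvent of $B$. Throughout, it is assumed that the algorithm does not stop, so that infinite sequences $\{x_n\},\{w_n\},\{z_n\},\{y_n\},\{\lambda_n\}$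 are generated. Condition (C1): $\Omega\neq\emptyset$. Condition (C3): there is $\varepsilon\in(1,\infty)$ such that (i) $0\le\alpha_n\le1$; (ii) $0\le\beta_n\le\beta_{n+1}\le\beta<\frac{3+2\varepsilon-\sqrt{8\varepsilon+17}}{2\varepsilon}$ for some constant $\beta$; (iii) $0<\theta<\theta_n\le\theta_{n+1}\le\frac{1}{1+\varepsilon}$ for some constant $\theta$; (iv) $a_n:=(1-\theta_n)\beta_n+\theta_n\alpha_n$ is non-decreasing; (v) $\sum_{n=1}^\infty p_n<\infty$ and $\lim_{n\to\infty}\mu_n=0$. A set-valued $B$ is $r$-strongly monotone if $\langle u-v,x-y\rangle\ge r\|x-y\|^2$ whenever $u\in Bx$, $v\in By$; a single-valued $A$ is $r$-strongly monotone if $\langle Ax-Ay,x-y\rangle\ge r\|x-y\|^2$ for all $x,y$. *)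

From HB Require Import structures.
From mathcomp Require Import all_boot all_order all_algebra.
From mathcomp Require Import all_classical all_reals all_analysis.
Set Implicit Arguments. Unset Strict Implicit. Unset Printing Implicit Defensive.
Import Order.TTheory GRing.Theory Num.Theory.
Import numFieldNormedType.Exports.
Local Open Scope classical_set_scope.
Local Open Scope ring_scope.

(* A real Hilbert space is modelled as a complete normed module H over a
   realType R together with an inner product ip inducing its norm. *)
Definition is_inner_product (R : realType) (H : normedModType R)
  (ip : H -> H -> R) : Prop :=
  (forall x y, ip x y = ip y x) /\
  (forall (a : R) (x y z : H), ip (a *: x + y) z = a * ip x z + ip y z) /\
  (forall x, ip x x = `|x| ^+ 2).

Definition set_monotone (R : realType) (H : normedModType R)
  (ip : H -> H -> R) (B : H -> set H) : Prop :=
  forall x y u v, B x u -> B y v -> 0 <= ip (u - v) (x - y).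

Definition set_strongly_monotone (R : realType) (H : normedModType R)
  (ip : H -> H -> R) (r : R) (B : H -> set H) : Prop :=
  forall x y u v, B x u -> B y v -> r * `|x - y| ^+ 2 <= ip (u - v) (x - y).

Definition maximal_monotone (R : realType) (H : normedModType R)
  (ip : H -> H -> R) (B : H -> set H) : Prop :=
  set_monotone ip B /\
  forall B' : H -> set H, set_monotone ip B' ->
    (forall x, B x `<=` B' x) -> forall x, B' x = B x.

Definition op_monotone (R : realType) (H : normedModType R)
  (ip : H -> H -> R) (A : H -> H) : Prop :=
  forall x y, 0 <= ip (A x - A y) (x - y).

Definition op_strongly_monotone (R : realType) (H : normedModType R)
  (ip : H -> H -> R) (r : R) (A : H -> H) : Prop :=
  forall x y, r * `|x - y| ^+ 2 <= ip (A x - A y) (x - y).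

Definition lipschitz_op (R : realType) (H : normedModType R)
  (L : R) (A : H -> H) : Prop :=
  forall x y, `|A x - A y| <= L * `|x - y|.

(* the resolvent (I + lam B)^{-1} applied to z, as a set:
   { y | z \in y + lam B y } *)
Definition resolvent (R : realType) (H : normedModType R)
  (B : H -> set H) (lam : R) (z : H) : set H :=
  [set y | exists u, B y u /\ z = y + lam *: u].

Definition zeros_sum (R : realType) (H : normedModType R)
  (A : H -> H) (B : H -> set H) : set H :=
  [set x | exists u, B x u /\ A x + u = 0].

From HB Require Import structures.
From mathcomp Require Import all_boot all_order all_algebra.
From mathcomp Require Import all_classical all_reals all_analysis.
From mathcomp Require Import ring lra.
Set Implicit Arguments.
Unset Strict Implicit.
Unset Printing Implicit Defensive.
Import Order.TTheory GRing.Theory Num.Theory.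
Import numFieldNormedType.Exports.
Local Open Scope classical_set_scope.
Local Open Scope ring_scope.

(* In both cases [A + B] is strongly monotone, so the
   forward-backward point satisfies
     lam_n r |y_n - q|^2 <= <(w_n - y_n) - lam_n (A w_n - A y_n), y_n - q>,
   and the self-adaptive step sizes converge to a positive limit, whence eventually
   lam_n |A w_n - A y_n| <= del |w_n - y_n| for some del < 1.  Expanding one step of
   the iteration in the inner product then shows that
     Gamma_n = |x_n - q|^2 - a_n |x_(n-1) - q|^2
               + (1 - theta_n) / theta_n (1 - beta_n) |x_n - x_(n-1)|^2
   eventually decreases by a fixed positive multiple of
   |x_n - x_(n-1)|^2 + |w_n - y_n|^2 + |y_n - q|^2; the bound on beta in (C3) is
   exactly what makes that multiple positive.  Since a_n <= (1 + beta) / 2 < 1,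
   Gamma_n is bounded below, so its decrements tend to 0, and so does
   |x_n - q| <= |x_n - x_(n-1)| + |w_n - y_n| + |y_n - q|. *)

Section InnerProduct.
Variables (R : realType) (H : normedModType R) (ip : H -> H -> R).
Hypothesis hip : is_inner_product ip.

Lemma ipC (x y : H) : ip x y = ip y x.
Proof. by case: hip. Qed.

Lemma ip_norm2 (x : H) : ip x x = `|x| ^+ 2.
Proof. by case: hip => _ []. Qed.

Lemma ip0l (z : H) : ip 0 z = 0.
Proof.
have [_ [ipZDl _]] := hip; have := ipZDl 1 0 0 z.
rewrite scaler0 addr0 mul1r; lra.
Qed.

Lemma ipDl (x y z : H) : ip (x + y) z = ip x z + ip y z.
Proof. by have [_ [ipZDl _]] := hip; rewrite -[x]scale1r ipZDl mul1r scale1r. Qed.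

Lemma ipZl (a : R) (x z : H) : ip (a *: x) z = a * ip x z.
Proof. by have [_ [ipZDl _]] := hip; rewrite -[a *: x]addr0 ipZDl ip0l addr0. Qed.

Lemma ipNl (x z : H) : ip (- x) z = - ip x z.
Proof. by rewrite -scaleN1r ipZl mulN1r. Qed.

Lemma ipBl (x y z : H) : ip (x - y) z = ip x z - ip y z.
Proof. by rewrite ipDl ipNl. Qed.

Lemma ipDr (x y z : H) : ip z (x + y) = ip z x + ip z y.
Proof. by rewrite !(ipC z) ipDl. Qed.

Lemma ipZr (a : R) (x z : H) : ip z (a *: x) = a * ip z x.
Proof. by rewrite !(ipC z) ipZl. Qed.

Lemma ipNr (x z : H) : ip z (- x) = - ip z x.
Proof. by rewrite !(ipC z) ipNl. Qed.

Lemma ipBr (x y z : H) : ip z (x - y) = ip z x - ip z y.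
Proof. by rewrite !(ipC z) ipBl. Qed.

Lemma ip_inj (u v : H) : (forall q, ip u q = ip v q) -> u = v.
Proof.
move=> huv; apply/eqP; rewrite -subr_eq0 -normr_eq0 -sqrf_eq0 -ip_norm2.
by rewrite ipBl huv subrr.
Qed.

Ltac ip_expand :=
  rewrite -?ip_norm2;
  do ?[rewrite ipDl | rewrite ipBl | rewrite ipZl | rewrite ipNl
      | rewrite ipDr | rewrite ipBr | rewrite ipZr | rewrite ipNr].

Ltac vector_ring := apply: ip_inj => ?; ip_expand; ring.

Lemma sqr_norm_convex (t : R) (a b : H) : `|(1 - t) *: a + t *: b| ^+ 2 =
  (1 - t) * `|a| ^+ 2 + t * `|b| ^+ 2 - t * (1 - t) * `|a - b| ^+ 2.
Proof. ip_expand; rewrite (ipC b a); ring. Qed.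

Lemma sqr_normD_shift (a b c : H) :
  `|b + c| ^+ 2 = `|a + b| ^+ 2 - `|a| ^+ 2 + `|c| ^+ 2 - 2 * ip (a - c) b.
Proof. ip_expand; rewrite (ipC b a) (ipC c b); ring. Qed.

Lemma sqr_normB_scale_ge (X Y : H) (b : R) : 0 <= b ->
  (1 - b) * `|X| ^+ 2 - b * (1 - b) * `|Y| ^+ 2 <= `|X - b *: Y| ^+ 2.
Proof.
move=> b_ge0; have -> : X - b *: Y = (1 - b) *: X + b *: (X - Y) by vector_ring.
rewrite sqr_norm_convex (_ : X - (X - Y) = Y); last by vector_ring.
have : 0 <= `|X - Y| ^+ 2 by rewrite sqr_ge0.
nra.
Qed.

Lemma tseng_step_estimate (xS x xP p w z y Aw Ay : H) (t al be lam r del : R) :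
  w = x + al *: (x - xP) -> z = x + be *: (x - xP) ->
  xS = (1 - t) *: z + t *: (y - lam *: (Ay - Aw)) ->
  lam * r * `|y - p| ^+ 2 <= ip ((w - y) - lam *: (Aw - Ay)) (y - p) ->
  lam * `|Aw - Ay| <= del * `|w - y| -> 0 <= lam -> 0 <= del ->
  0 < t -> t < 1 -> 0 <= be ->
  `|xS - p| ^+ 2 <= (1 + ((1 - t) * be + t * al)) * `|x - p| ^+ 2
      - ((1 - t) * be + t * al) * `|xP - p| ^+ 2
      + ((1 - t) * be * (1 + be) + t * al * (1 + al)) * `|x - xP| ^+ 2
      - t * (1 - del ^+ 2) * `|w - y| ^+ 2 - 2 * t * lam * r * `|y - p| ^+ 2
      - (1 - t) / t * ((1 - be) * `|xS - x| ^+ 2 - be * (1 - be) * `|x - xP| ^+ 2).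
Proof.
move=> hw hz hx hmon hlip lam_ge0 del_ge0 t_gt0 t_lt1 be_ge0.
set u := y - lam *: (Ay - Aw).
have eP := sqr_norm_convex t (z - p) (u - p).
have eZ := sqr_norm_convex (- be) (x - p) (xP - p).
have eW := sqr_norm_convex (- al) (x - p) (xP - p).
have eU := sqr_normD_shift (w - y) (y - p) (lam *: (Aw - Ay)).
have eY := @sqr_normB_scale_ge (xS - x) (x - xP) be be_ge0.
rewrite (_ : (1 - t) *: (z - p) + t *: (u - p) = xS - p) in eP; last by rewrite hx; vector_ring.
rewrite (_ : (z - p) - (u - p) = - (u - z)) ?normrN in eP; last by vector_ring.
rewrite (_ : (1 - - be) *: (x - p) + - be *: (xP - p) = z - p) in eZ; last by rewrite hz; vector_ring.
rewrite (_ : (1 - - al) *: (x - p) + - al *: (xP - p) = w - p) in eW; last by rewrite hw; vector_ring.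
rewrite (_ : (x - p) - (xP - p) = x - xP) in eZ eW; last by vector_ring.
rewrite (_ : (y - p) + lam *: (Aw - Ay) = u - p) in eU; last by vector_ring.
rewrite (_ : (w - y) + (y - p) = w - p) in eU; last by vector_ring.
rewrite (_ : (xS - x) - be *: (x - xP) = t *: (u - z)) in eY; last by rewrite hx hz; vector_ring.
rewrite normrZ exprMn real_normK ?num_real // in eY.
have hAw : `|lam *: (Aw - Ay)| ^+ 2 <= del ^+ 2 * `|w - y| ^+ 2.
  by rewrite normrZ ger0_norm // -exprMn ler_sqr ?nnegrE ?mulr_ge0.
have hUZ : t * (1 - t) * `|u - z| ^+ 2 = (1 - t) / t * (t ^+ 2 * `|u - z| ^+ 2).
  by field; rewrite gt_eqF.
have hY : (1 - t) / t * ((1 - be) * `|xS - x| ^+ 2 - be * (1 - be) * `|x - xP| ^+ 2)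
    <= (1 - t) / t * (t ^+ 2 * `|u - z| ^+ 2).
  by apply: ler_wpM2l => //; apply: divr_ge0; lra.
have hmon_t : t * (lam * r * `|y - p| ^+ 2)
    <= t * ip ((w - y) - lam *: (Aw - Ay)) (y - p) by apply: ler_wpM2l => //; lra.
have hAw_t : t * `|lam *: (Aw - Ay)| ^+ 2 <= t * (del ^+ 2 * `|w - y| ^+ 2).
  by apply: ler_wpM2l => //; lra.
rewrite eP eZ eU eW; lra.
Qed.

Lemma resolvent_step_ge (A : H -> H) (B : H -> set H) (p w y : H) (lam r : R) :
  0 <= lam -> y \in resolvent B lam (w - lam *: A w) ->
  (forall v, B y v -> r * `|y - p| ^+ 2 <= ip (v + A y) (y - p)) ->
  lam * r * `|y - p| ^+ 2 <= ip ((w - y) - lam *: (A w - A y)) (y - p).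
Proof.
move=> lam_ge0; rewrite inE => -[v [Byv /eqP]]; rewrite subr_eq => /eqP hw hAB.
rewrite (_ : (w - y) - lam *: (A w - A y) = lam *: (v + A y)); last first.
  by rewrite {1}hw; vector_ring.
by rewrite ipZl -mulrA ler_wpM2l // hAB.
Qed.

Lemma sum_strongly_monotone_at (A : H -> H) (B : H -> set H) (r : R) (p u : H) :
  (op_strongly_monotone ip r A /\ maximal_monotone ip B) \/
  (op_monotone ip A /\ maximal_monotone ip B /\ set_strongly_monotone ip r B) ->
  B p u -> A p + u = 0 ->
  forall y v, B y v -> r * `|y - p| ^+ 2 <= ip (v + A y) (y - p).
Proof.
move=> hAB Bpu hsol y v Byv.
have hu : u = - A p by apply/eqP; rewrite -addr_eq0 addrC hsol.
have -> : v + A y = (v - u) + (A y - A p) by rewrite hu opprK addrACA subrr addr0.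
rewrite ipDl; case: hAB => [[Asm [Bm _]] | [Am [[Bm _] Bsm]]].
- by have := Bm y p v u Byv Bpu; have := Asm y p; lra.
- by have := Bsm y p v u Byv Bpu; have := Am y p; lra.
Qed.

End InnerProduct.

Section LyapunovGap.
Variable R : realType.

(* (C3)(ii) asks [bet] to lie below the smaller root of this quadratic. *)
Definition lyap_gap (eps bet : R) :=
  (eps ^+ 2 * bet ^+ 2 - eps * (3 + 2 * eps) * bet + (eps ^+ 2 + eps - 2))
  / (1 + eps) ^+ 2.

Lemma inertia_bound_spec (eps bet : R) : 1 < eps ->
  bet < (3 + 2 * eps - Num.sqrt (8 * eps + 17)) / (2 * eps) ->
  0 < lyap_gap eps bet /\ bet < 1.
Proof.
move=> eps_gt1; rewrite ltr_pdivlMr; last lra.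
set s := Num.sqrt _ => hbet.
have s_ge0 : 0 <= s by exact: sqrtr_ge0.
have s2 : s ^+ 2 = 8 * eps + 17 by rewrite sqr_sqrtr //; lra.
have s_gt3 : 3 < s by nra.
split; last by nra.
have den_gt0 : 0 < (1 + eps) ^+ 2 by rewrite exprn_gt0 //; lra.
apply: divr_gt0 => //.
have : s ^+ 2 < (3 + 2 * eps - 2 * eps * bet) ^+ 2 by nra.
rewrite s2; nra.
Qed.

Lemma lyap_gap_poly_le (b bet t ts : R) :
  0 <= b -> b <= bet -> bet < 1 -> 0 < t -> t <= ts -> ts <= 1 / 2 ->
  (1 - ts) * (1 - bet) ^+ 2 - ts * (1 - ts) * (bet * (1 + bet)) - 2 * ts ^+ 2
  <= (1 - t) * (1 - b) ^+ 2 - t * (1 - t) * (b * (1 + b)) - 2 * t ^+ 2.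
Proof.
move=> b_ge0 b_le bet_lt1 t_gt0 t_le ts_le.
have mono_b : 0 <= (1 - t) * ((bet - b) * ((2 - b - bet) + t * (1 + b + bet))).
  by apply: mulr_ge0; [lra | apply: mulr_ge0; nra].
have mono_t : 0 <= (ts - t) * ((1 - bet) ^+ 2 + bet * (1 + bet) * (1 - ts - t) + 2 * (ts + t)).
  apply: mulr_ge0; first lra.
  have : 0 <= bet * (1 + bet) * (1 - ts - t) by apply: mulr_ge0; nra.
  have : 0 <= (1 - bet) ^+ 2 by rewrite sqr_ge0.
  lra.
nra.
Qed.

Lemma lyap_gap_le (eps bet t b a : R) :
  1 < eps -> 0 <= b -> b <= bet -> bet < 1 -> 0 < t -> t <= 1 / (1 + eps) ->
  0 <= a <= 1 -> 0 < lyap_gap eps bet ->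
  lyap_gap eps bet <= (1 - t) / t * (1 - b) ^+ 2 - ((1 - t) * b * (1 + b) + t * a * (1 + a)).
Proof.
move=> eps_gt1 b_ge0 b_le bet_lt1 t_gt0 t_le /andP[a_ge0 a_le1] gap_gt0.
have half : 1 / (1 + eps) <= 1 / 2 by rewrite ler_pdivrMr; lra.
(* the gap is the polynomial of [lyap_gap_poly_le] at [ts = 1 / (1 + eps)] *)
have := @lyap_gap_poly_le b bet t (1 / (1 + eps)) b_ge0 b_le bet_lt1 t_gt0 t_le half.
rewrite (_ : _ - 2 * (1 / (1 + eps)) ^+ 2 = lyap_gap eps bet) => [hpoly|]; last first.
  by rewrite /lyap_gap; field; lra.
set rhs := (1 - t) / t * _ - _.
have t_rhs : t * rhs = (1 - t) * (1 - b) ^+ 2 - t * (1 - t) * (b * (1 + b)) - t ^+ 2 * (a * (1 + a)).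
  by rewrite /rhs; field; rewrite gt_eqF.
have : t ^+ 2 * (a * (1 + a)) <= t ^+ 2 * 2 by rewrite ler_pM2l ?exprn_gt0 //; nra.
have : t < 1 by move: t_le half; lra.
nra.
Qed.

End LyapunovGap.

Section Sequences.
Variable R : realType.

Lemma nonincreasing_from (G : nat -> R) (N : nat) :
  (forall n, (N <= n)%N -> G n.+1 <= G n) ->
  forall n m, (N <= n)%N -> (n <= m)%N -> G m <= G n.
Proof.
move=> G_dec n m Nn; elim: m => [|m IH]; first by rewrite leqn0 => /eqP ->.
rewrite leq_eqVlt => /orP[/eqP <- //|nm].
exact: le_trans (G_dec m (leq_trans Nn nm)) (IH nm).
Qed.

Lemma nonincreasing_lbounded_subS_cvg0 (G : nat -> R) (N : nat) (m : R) :
  (forall n, (N <= n)%N -> G n.+1 <= G n) -> (forall n, (N <= n)%N -> m <= G n) ->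
  (fun n => G n - G n.+1) @ \oo --> 0.
Proof.
move=> G_dec G_ge.
have G_cvg : cvgn G.
  apply: (@near_nonincreasing_is_cvgn _ _ m); last by exists N.
  by exists N => // n /= Nn j; exact: nonincreasing_from G_dec n j Nn.
rewrite -(subrr (limn G)); apply: cvgB => //.
by rewrite (cvg_shiftS G).
Qed.

Lemma cvgn_le_summable (lam p : nat -> R) :
  (forall n, (0 < n)%N -> 0 <= lam n) ->
  (forall n, (0 < n)%N -> lam n.+1 <= lam n + p n) ->
  (forall n, 0 <= p n) -> cvgn (series p) -> cvgn lam.
Proof.
move=> lam_ge0 lam_le p_ge0 p_sum.
have sum_le : forall n, series p n <= limn (series p).
  apply: nondecreasing_cvgn_le p_sum; apply/nondecreasing_seqP => n.
  by rewrite seriesSr lerDl.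
have dec_cvg : cvgn (fun n => lam n - series p n).
  apply: (@near_nonincreasing_is_cvgn _ _ (- limn (series p))).
    exists 1%N => // n /= n_gt0 j.
    apply: (@nonincreasing_from (fun n => lam n - series p n) 1%N) => // k k_gt0.
    by rewrite seriesSr; have := lam_le k k_gt0; lra.
  by exists 1%N => // n /= n_gt0; have := lam_ge0 n n_gt0; have := sum_le n; lra.
have -> : lam = (fun n => lam n - series p n) + series p.
  by apply/funext => n /=; rewrite subrK.
exact: is_cvgD dec_cvg p_sum.
Qed.

(* The bound [C / (1 - abar)] is the fixed point of [u |-> C + abar * u]. *)
Lemma affine_recursion_bounded (u a : nat -> R) (N : nat) (C abar : R) :
  abar < 1 -> (forall n, (N < n)%N -> 0 <= a n <= abar) -> (forall n, 0 <= u n) ->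
  (forall n, (N < n)%N -> u n <= C + a n * u n.-1) ->
  forall n, (N <= n)%N -> u n <= Num.max (u N) (C / (1 - abar)).
Proof.
move=> abar_lt1 a_in u_ge0 u_le n /subnKC <-; set M := Num.max _ _.
elim: (n - N)%N => [|k IH]; first by rewrite addn0 le_max lexx.
rewrite addnS; have Nk : (N < (N + k).+1)%N by rewrite ltnS leq_addr.
have /andP[a_ge0 a_le] := a_in _ Nk.
have C_le : C <= (1 - abar) * M.
  by rewrite mulrC -ler_pdivrMr ?subr_gt0 // le_max lexx orbT.
have aM : a (N + k).+1 * u (N + k) <= abar * M.
  by apply: ler_pM; [exact: a_ge0 | exact: u_ge0 | exact: a_le | exact: IH].
by apply: le_trans (u_le _ Nk) _; rewrite /=; lra.
Qed.

Lemma cvg_sqr_dist_le (H : normedModType R) (x : nat -> H) (q : H) (c : R)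
    (g : nat -> R) (N : nat) :
  0 < c -> g @ \oo --> 0 -> (forall n, (N <= n)%N -> c * `|x n - q| ^+ 2 <= g n) ->
  x @ \oo --> q.
Proof.
move=> c_gt0 g_cvg0 hx; apply/cvgrPdist_lt => e e_gt0.
have ce2_gt0 : 0 < c * e ^+ 2 by rewrite mulr_gt0 ?exprn_gt0.
near=> n; rewrite distrC -(ltr_pXn2r (_ : 0 < 2)%N) ?nnegrE ?(ltW e_gt0) //.
rewrite -(ltr_pM2l c_gt0); apply: le_lt_trans (hx n _) _; first by near: n; exists N.
by near: n; exact: cvgr_lt g_cvg0 _ ce2_gt0.
Unshelve. all: by end_near.
Qed.

End Sequences.

Section StepSize.
Variables (R : realType) (H : normedModType R) (A : H -> H) (w y : nat -> H).
Variables (mu L lam1 : R) (mun p lam : nat -> R).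
Hypotheses (mu_gt0 : 0 < mu) (L_gt0 : 0 < L) (A_lip : lipschitz_op L A).
Hypotheses (lam1_gt0 : 0 < lam1) (mun_ge0 : forall n, 0 <= mun n) (p_ge0 : forall n, 0 <= p n).
Hypothesis lam_1 : lam 1%N = lam1.
Hypothesis lam_S : forall n, (0 < n)%N ->
  lam n.+1 = if A (w n) != A (y n)
             then Num.min ((mun n + mu) * `|w n - y n| / `|A (w n) - A (y n)|) (lam n + p n)
             else lam n + p n.

Lemma step_size_le n : (0 < n)%N -> lam n.+1 <= lam n + p n.
Proof. by move=> n_gt0; rewrite lam_S //; case: ifP => _; rewrite ?ge_min ?lexx ?orbT. Qed.

Lemma step_size_ge n : (0 < n)%N -> Num.min lam1 (mu / L) <= lam n.
Proof.
elim: n => [//|[_ _|n IH _]]; first by rewrite lam_1 ge_min lexx.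
have lam_ge := IH isT; rewrite lam_S //.
case: ifPn => [Aneq | _]; last by have := p_ge0 n.+1; lra.
rewrite le_min; apply/andP; split; last by have := p_ge0 n.+1; lra.
rewrite ler_pdivlMr ?normr_gt0 ?subr_eq0 //.
apply: le_trans (_ : mu / L * (L * `|w n.+1 - y n.+1|) <= _).
  by apply: ler_pM => //; rewrite ?ge_min ?lexx ?orbT // le_min; apply/andP; split;
    [exact: ltW | rewrite divr_ge0 // ltW].
rewrite mulrA divfK ?gt_eqF // ler_wpM2r //; have := mun_ge0 n.+1; lra.
Qed.

Lemma step_size_gt0 n : (0 < n)%N -> 0 < lam n.
Proof.
by move=> n_gt0; apply: lt_le_trans (step_size_ge n_gt0); rewrite lt_min lam1_gt0 divr_gt0.
Qed.

Hypothesis p_summable : cvgn (series p).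

Lemma step_size_cvgn : cvgn lam.
Proof.
apply: cvgn_le_summable p_ge0 p_summable; last exact: step_size_le.
by move=> n /step_size_gt0/ltW.
Qed.

Hypothesis mun_cvg0 : mun @ \oo --> 0.

(* [lam n] converges to a positive limit while [mun n + mu] tends to [mu < del]. *)
Lemma step_size_ratio (del : R) : mu < del -> exists2 N, (0 < N)%N &
  forall n, (N <= n)%N -> lam n * `|A (w n) - A (y n)| <= del * `|w n - y n|.
Proof.
move=> mu_lt_del.
have [N _ gap_gt0] : \forall n \near \oo, 0 < del * lam n.+1 - (mun n + mu) * lam n.
  have lim_gt0 : 0 < limn lam.
    apply: lt_le_trans (_ : Num.min lam1 (mu / L) <= _); first by rewrite lt_min lam1_gt0 divr_gt0.
    by apply: limr_ge step_size_cvgn _; exists 1%N => // n /= /step_size_ge.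
  have lim_gap : (fun n => del * lam n.+1 - (mun n + mu) * lam n) @ \oo
      --> del * limn lam - (0 + mu) * limn lam.
    apply: cvgB; apply: cvgM; [exact: cvg_cst | | | exact: step_size_cvgn].
      by rewrite (cvg_shiftS lam); exact: step_size_cvgn.
    exact: cvgD mun_cvg0 (cvg_cst _).
  by apply: cvgr_gt lim_gap _ _; rewrite add0r -mulrBl mulr_gt0 // subr_gt0.
exists (maxn N 1) => [|n]; first by rewrite leq_max orbT.
rewrite geq_max => /andP[/gap_gt0 /= gap n_gt0].
have c_gt0 : 0 < mun n + mu by rewrite ltr_wpDl // mun_ge0.
have del_ge0 : 0 <= del by rewrite ltW // (lt_trans mu_gt0).
case: (eqVneq (A (w n)) (A (y n))) => [-> | Aneq].
  by rewrite subrr normr0 mulr0 mulr_ge0.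
have := lam_S n_gt0; rewrite Aneq => lamS.
have lamS_le : lam n.+1 * `|A (w n) - A (y n)| <= (mun n + mu) * `|w n - y n|.
  by rewrite -ler_pdivlMr ?normr_gt0 ?subr_eq0 // lamS ge_min lexx.
rewrite -(ler_pM2l c_gt0) mulrA; apply: le_trans (_ : del * lam n.+1 * `|A (w n) - A (y n)| <= _).
  by rewrite ler_wpM2r // ltW // -subr_gt0.
by rewrite -mulrA [leRHS]mulrCA; apply: ler_wpM2l.
Qed.

End StepSize.

Section Convergence.
Variables (R : realType) (H : normedModType R) (ip : H -> H -> R).
Hypothesis hip : is_inner_product ip.
Variables (A : H -> H) (x w z y : nat -> H) (alpha beta theta lam : nat -> R).
Variables (p : H) (eps bet th r del lam_min : R) (N : nat).
Hypotheses (eps_gt1 : 1 < eps)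
  (bet_small : bet < (3 + 2 * eps - Num.sqrt (8 * eps + 17)) / (2 * eps)).
Hypothesis alpha_in : forall n, (0 < n)%N -> 0 <= alpha n <= 1.
Hypothesis beta_in : forall n, (0 < n)%N ->
  0 <= beta n /\ beta n <= beta n.+1 /\ beta n.+1 <= bet.
Hypothesis th_gt0 : 0 < th.
Hypothesis theta_in : forall n, (0 < n)%N ->
  th < theta n /\ theta n <= theta n.+1 /\ theta n.+1 <= 1 / (1 + eps).

Definition inertia n := (1 - theta n) * beta n + theta n * alpha n.

Hypothesis inertia_nondecreasing : forall n, (0 < n)%N -> inertia n <= inertia n.+1.
Hypothesis w_def : forall n, (0 < n)%N -> w n = x n + alpha n *: (x n - x n.-1).
Hypothesis z_def : forall n, (0 < n)%N -> z n = x n + beta n *: (x n - x n.-1).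
Hypothesis x_def : forall n, (0 < n)%N ->
  x n.+1 = (1 - theta n) *: z n + theta n *: (y n - lam n *: (A (y n) - A (w n))).
Hypotheses (r_gt0 : 0 < r) (lam_min_gt0 : 0 < lam_min).
Hypothesis lam_ge : forall n, (0 < n)%N -> lam_min <= lam n.
Hypothesis y_est : forall n, (0 < n)%N ->
  lam n * r * `|y n - p| ^+ 2 <= ip ((w n - y n) - lam n *: (A (w n) - A (y n))) (y n - p).
Hypotheses (del_ge0 : 0 <= del) (del_lt1 : del < 1) (N_gt0 : (0 < N)%N).
Hypothesis step_ratio : forall n, (N <= n)%N ->
  lam n * `|A (w n) - A (y n)| <= del * `|w n - y n|.

Definition lyap n := `|x n - p| ^+ 2 - inertia n * `|x n.-1 - p| ^+ 2
  + (1 - theta n) / theta n * (1 - beta n) * `|x n - x n.-1| ^+ 2.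

Lemma theta_bounds n : (0 < n)%N -> 0 < theta n <= 1 / 2.
Proof.
move=> n_gt0; have [th_lt [th_le th_le_eps]] := theta_in n_gt0.
move: (eps_gt1) (th_gt0) => ? ?.
have half : 1 / (1 + eps) <= 1 / 2 by rewrite ler_pdivrMr; lra.
by apply/andP; split; lra.
Qed.

Lemma lyap_weight_nonincreasing n : (0 < n)%N ->
  (1 - theta n.+1) / theta n.+1 * (1 - beta n.+1) <= (1 - theta n) / theta n * (1 - beta n).
Proof.
move=> n_gt0; have /andP[t_gt0 t_le] := theta_bounds n_gt0.
have /andP[t1_gt0 t1_le] := theta_bounds (ltnW n_gt0 : (0 < n.+1)%N).
have [_ [t_t1 _]] := theta_in n_gt0; have [b_ge0 [b_b1 b1_le]] := beta_in n_gt0.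
have [_ bet_lt1] := inertia_bound_spec eps_gt1 bet_small.
apply: ler_pM; [| lra | | lra]; first by rewrite divr_ge0 //; lra.
by rewrite ler_pdivrMr // mulrAC ler_pdivlMr //; nra.
Qed.

Lemma one_sub_del2_gt0 : 0 < 1 - del ^+ 2.
Proof. by rewrite subr_gt0 expr_lt1 // (le_lt_trans _ del_lt1) ?ler_norm. Qed.

Lemma lyap_decrease n : (N <= n)%N ->
  lyap n.+1 + lyap_gap eps bet * `|x n - x n.-1| ^+ 2
    + th * (1 - del ^+ 2) * `|w n - y n| ^+ 2 + 2 * th * lam_min * r * `|y n - p| ^+ 2
  <= lyap n.
Proof.
move=> Nn; have n_gt0 : (0 < n)%N := leq_trans N_gt0 Nn.
have /andP[t_gt0 t_le_half] := theta_bounds n_gt0.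
have [th_lt [t_t1 t1_le]] := theta_in n_gt0.
have [b_ge0 [b_b1 b1_le]] := beta_in n_gt0.
have [gap_gt0 bet_lt1] := inertia_bound_spec eps_gt1 bet_small.
have lam_min_le := lam_ge n_gt0.
have lam_ge0 : 0 <= lam n by apply: le_trans (ltW lam_min_gt0) _.
have t_lt1 : theta n < 1 by lra.
have step := tseng_step_estimate hip (w_def n_gt0) (z_def n_gt0) (x_def n_gt0)
  (y_est n_gt0) (step_ratio Nn) lam_ge0 del_ge0 t_gt0 t_lt1 b_ge0.
have gap_le := lyap_gap_le eps_gt1 b_ge0 (le_trans b_b1 b1_le) bet_lt1 t_gt0
  (le_trans t_t1 t1_le) (alpha_in n_gt0) gap_gt0.
have weight := lyap_weight_nonincreasing n_gt0.
have a_le := inertia_nondecreasing n_gt0.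
rewrite /lyap /inertia /= in a_le *.
have [Q_ge0 D_ge0 D'_ge0 W_ge0 Y_ge0] : [/\ 0 <= `|x n - p| ^+ 2, 0 <= `|x n - x n.-1| ^+ 2,
  0 <= `|x n.+1 - x n| ^+ 2, 0 <= `|w n - y n| ^+ 2 & 0 <= `|y n - p| ^+ 2].
  by split; rewrite sqr_ge0.
have e1 := ler_wpM2r D'_ge0 weight.
have e2 := ler_wpM2r Q_ge0 a_le.
have e3 := ler_wpM2r D_ge0 gap_le.
have e4 := ler_wpM2r (mulr_ge0 (ltW one_sub_del2_gt0) W_ge0) (ltW th_lt).
have e5 : th * lam_min <= theta n * lam n.
  by apply: ler_pM; [exact: ltW | exact: ltW | exact: ltW | exact: lam_min_le].
have e5' := ler_wpM2r (mulr_ge0 (ltW r_gt0) Y_ge0) e5.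
lra.
Qed.

Lemma lyap_nonincreasing n : (N <= n)%N -> lyap n.+1 <= lyap n.
Proof.
move=> /lyap_decrease; have [gap_gt0 _] := inertia_bound_spec eps_gt1 bet_small.
have := mulr_ge0 (ltW gap_gt0) (sqr_ge0 `|x n - x n.-1|).
have := mulr_ge0 (mulr_ge0 (ltW th_gt0) (ltW one_sub_del2_gt0)) (sqr_ge0 `|w n - y n|).
have : 0 <= 2 * th * lam_min * r * `|y n - p| ^+ 2 by rewrite !mulr_ge0 ?sqr_ge0 // ltW.
lra.
Qed.

Lemma inertia_le n : (0 < n)%N -> 0 <= inertia n <= (1 + bet) / 2.
Proof.
move=> n_gt0; have /andP[t_gt0 t_le] := theta_bounds n_gt0.
have [b_ge0 [b_b1 b1_le]] := beta_in n_gt0; have /andP[a_ge0 a_le1] := alpha_in n_gt0.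
have [_ bet_lt1] := inertia_bound_spec eps_gt1 bet_small.
by rewrite /inertia; apply/andP; split; nra.
Qed.

Lemma lyap_ge n : (0 < n)%N ->
  `|x n - p| ^+ 2 - inertia n * `|x n.-1 - p| ^+ 2 <= lyap n.
Proof.
move=> n_gt0; have /andP[t_gt0 t_le] := theta_bounds n_gt0.
have [_ [b_b1 b1_le]] := beta_in n_gt0.
have [_ bet_lt1] := inertia_bound_spec eps_gt1 bet_small.
rewrite /lyap lerDl; apply: mulr_ge0 (sqr_ge0 _).
by apply: mulr_ge0; [apply: divr_ge0 |]; lra.
Qed.

Lemma lyap_lbounded : exists m, forall n, (N <= n)%N -> m <= lyap n.
Proof.
have [_ bet_lt1] := inertia_bound_spec eps_gt1 bet_small.
have abar_lt1 : (1 + bet) / 2 < 1 by lra.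
set u := fun n => `|x n - p| ^+ 2.
have u_le : forall n, (N.-1 < n)%N -> u n <= lyap N + inertia n * u n.-1.
  move=> n; rewrite -ltnS prednK // ltnS => Nn.
  have := lyap_ge (leq_trans N_gt0 Nn); have := nonincreasing_from lyap_nonincreasing (leqnn N) Nn.
  rewrite /u; lra.
have a_in : forall n, (N.-1 < n)%N -> 0 <= inertia n <= (1 + bet) / 2.
  by move=> n Nn; apply: inertia_le; apply: leq_ltn_trans Nn.
have u_bounded := affine_recursion_bounded abar_lt1 a_in (fun n => sqr_ge0 _) u_le.
exists (- ((1 + bet) / 2 * Num.max (u N.-1) (lyap N / (1 - (1 + bet) / 2)))) => n Nn.
have n_gt0 : (0 < n)%N := leq_trans N_gt0 Nn.
have /andP[a_ge0 a_le] := inertia_le n_gt0.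
have u_le_M : u n.-1 <= Num.max (u N.-1) (lyap N / (1 - (1 + bet) / 2)).
  by apply: u_bounded; rewrite -!subn1 leq_sub2r.
have := ler_pM a_ge0 (sqr_ge0 _) a_le u_le_M.
have := lyap_ge n_gt0; have := sqr_ge0 `|x n - p|; rewrite /u; lra.
Qed.

Lemma dist_le_residuals n : (0 < n)%N ->
  `|x n - p| <= `|x n - x n.-1| + `|w n - y n| + `|y n - p|.
Proof.
move=> n_gt0; have /andP[a_ge0 a_le1] := alpha_in n_gt0.
have -> : x n - p = (w n - y n) + (y n - p) - alpha n *: (x n - x n.-1).
  by rewrite (w_def n_gt0) addrA subrK addrAC addrK.
have : `|alpha n *: (x n - x n.-1)| <= `|x n - x n.-1|.
  by rewrite normrZ ger0_norm // ler_piMl.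
have := ler_normB (w n - y n + (y n - p)) (alpha n *: (x n - x n.-1)).
have := ler_normD (w n - y n) (y n - p); lra.
Qed.

Theorem inertial_tseng_cvg : x @ \oo --> p.
Proof.
have [m lyap_ge_m] := lyap_lbounded.
have [gap_gt0 _] := inertia_bound_spec eps_gt1 bet_small.
have c1_gt0 : 0 < th * (1 - del ^+ 2) by rewrite mulr_gt0 ?one_sub_del2_gt0.
have c2_gt0 : 0 < 2 * th * lam_min * r by rewrite !mulr_gt0.
pose c := Num.min (lyap_gap eps bet) (Num.min (th * (1 - del ^+ 2)) (2 * th * lam_min * r)).
have c_gt0 : 0 < c / 3 by rewrite divr_gt0 // !lt_min gap_gt0 c1_gt0.
apply: (cvg_sqr_dist_le c_gt0 (nonincreasing_lbounded_subS_cvg0 lyap_nonincreasing lyap_ge_m)).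
move=> n Nn; have dec := lyap_decrease Nn.
have dist := dist_le_residuals (leq_trans N_gt0 Nn).
set e := `|x n - p| in dist *; set a := `|x n - x n.-1| in dist dec.
set b := `|w n - y n| in dist dec; set d := `|y n - p| in dist dec.
have [e_ge0 a_ge0 b_ge0 d_ge0] : [/\ 0 <= e, 0 <= a, 0 <= b & 0 <= d] by split; apply: normr_ge0.
have e2_le : e ^+ 2 <= 3 * (a ^+ 2 + b ^+ 2 + d ^+ 2).
  apply: le_trans (_ : (a + b + d) ^+ 2 <= _); first by rewrite ler_sqr ?nnegrE ?addr_ge0.
  have := sqr_ge0 (a - b); have := sqr_ge0 (b - d); have := sqr_ge0 (a - d); nra.
have [c_gap c_c1 c_c2] : [/\ c <= lyap_gap eps bet, c <= th * (1 - del ^+ 2)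
                          & c <= 2 * th * lam_min * r] by rewrite /c !ge_min !lexx ?orbT.
have := ler_wpM2r (sqr_ge0 a) c_gap; have := ler_wpM2r (sqr_ge0 b) c_c1.
have := ler_wpM2r (sqr_ge0 d) c_c2; have := ler_wpM2l (ltW c_gt0) e2_le.
lra.
Qed.

End Convergence.

Theorem theorem4p1 (R : realType) (H : completeNormedModType R)
  (ip : H -> H -> R) (A : H -> H) (B : H -> set H)
  (mu lam1 : R) (alpha beta theta mun p : nat -> R)
  (x w z y : nat -> H) (lam : nat -> R) :
  is_inner_product ip ->
  (* operator hypotheses: case (a) or case (b) *)
  ((exists L r : R, 0 < L /\ 0 < r /\ lipschitz_op L A /\
       op_strongly_monotone ip r A /\ maximal_monotone ip B) \/
   (exists L r : R, 0 < L /\ 0 < r /\ lipschitz_op L A /\ op_monotone ip A /\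
       maximal_monotone ip B /\ set_strongly_monotone ip r B)) ->
  (* (C1) *)
  zeros_sum A B !=set0 ->
  0 < mu < 1 -> 0 < lam1 ->
  (forall n, 0 <= mun n) -> (forall n, 0 <= p n) ->
  (* (C3) *)
  (exists eps : R, 1 < eps /\
     (forall n, (0 < n)%N -> 0 <= alpha n <= 1) /\
     (exists bet : R, bet < (3 + 2 * eps - Num.sqrt (8 * eps + 17)) / (2 * eps) /\
        forall n, (0 < n)%N -> 0 <= beta n /\ beta n <= beta n.+1 /\ beta n.+1 <= bet) /\
     (exists th : R, 0 < th /\
        forall n, (0 < n)%N -> th < theta n /\ theta n <= theta n.+1 /\
                              theta n.+1 <= 1 / (1 + eps)) /\
     (forall n, (0 < n)%N ->
        (1 - theta n) * beta n + theta n * alpha n <=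
        (1 - theta n.+1) * beta n.+1 + theta n.+1 * alpha n.+1) /\
     cvgn (series p) /\ mun @ \oo --> (0 : R)) ->
  (* Algorithm 3.1, n = 1, 2, ... (x 0, x 1 arbitrary) *)
  lam 1%N = lam1 ->
  (forall n, (0 < n)%N -> w n = x n + alpha n *: (x n - x n.-1)) ->
  (forall n, (0 < n)%N -> z n = x n + beta n *: (x n - x n.-1)) ->
  (forall n, (0 < n)%N -> y n \in resolvent B (lam n) (w n - lam n *: A (w n))) ->
  (forall n, (0 < n)%N ->
     lam n.+1 = if A (w n) != A (y n)
                then Num.min ((mun n + mu) * `|w n - y n| / `|A (w n) - A (y n)|)
                             (lam n + p n)
                else lam n + p n) ->
  (* the algorithm does not stop *)
  (forall n, (0 < n)%N -> w n != y n) ->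
  (forall n, (0 < n)%N ->
     x n.+1 = (1 - theta n) *: z n + theta n *: (y n - lam n *: (A (y n) - A (w n)))) ->
  exists q : H, zeros_sum A B q /\ x @ \oo --> q.
Proof.
move=> hip hops [q [u [Bqu sol]]] /andP[mu_gt0 mu_lt1] lam1_gt0 mun_ge0 p_ge0
  [eps [eps_gt1 [alpha_in [[bet [bet_small beta_in]] [[th [th_gt0 theta_in]]
  [inertia_nondecr [p_summable mun_cvg0]]]]]]] lam_1 w_def z_def y_res lam_S _ x_def.
have [L [r [L_gt0 r_gt0 A_lip AB_sm]]] : exists L r : R, [/\ 0 < L, 0 < r,
    lipschitz_op L A & (op_strongly_monotone ip r A /\ maximal_monotone ip B) \/
    (op_monotone ip A /\ maximal_monotone ip B /\ set_strongly_monotone ip r B)].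
  by case: hops => -[L [r [? [? [? hAB]]]]]; exists L, r; split => //; [left | right].
have lam_ge := step_size_ge mu_gt0 L_gt0 A_lip lam1_gt0 mun_ge0 p_ge0 lam_1 lam_S.
have lam_min_gt0 : 0 < Num.min lam1 (mu / L) by rewrite lt_min lam1_gt0 divr_gt0.
have [mu_lt_del del_ge0 del_lt1] : [/\ mu < (1 + mu) / 2, 0 <= (1 + mu) / 2 & (1 + mu) / 2 < 1].
  by split; lra.
have [N N_gt0 ratio] := step_size_ratio mu_gt0 L_gt0 A_lip lam1_gt0 mun_ge0 p_ge0
  lam_1 lam_S p_summable mun_cvg0 mu_lt_del.
have AB_sm_q := sum_strongly_monotone_at hip AB_sm Bqu sol.
have y_est n : (0 < n)%N -> lam n * r * `|y n - q| ^+ 2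
    <= ip ((w n - y n) - lam n *: (A (w n) - A (y n))) (y n - q).
  move=> n_gt0; have lam_ge0 := ltW (lt_le_trans lam_min_gt0 (lam_ge n n_gt0)).
  apply: (resolvent_step_ge hip lam_ge0 (y_res n n_gt0)) => v; exact: AB_sm_q.
exists q; split; first by exists u.
exact: (inertial_tseng_cvg hip eps_gt1 bet_small alpha_in beta_in th_gt0 theta_in
  inertia_nondecr w_def z_def x_def r_gt0 lam_min_gt0 lam_ge y_est del_ge0 del_lt1 N_gt0 ratio).
Qed.
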